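(* Let $\mu$ be a finite Borel measure on $\Sigma$ and $\nu=\mu\circ\Pi^{-1}$. (i) Suppose $\mathcal{D}$ is two-dimensional. Then for every $x=\Pi(\omega)\in\Lambda$ with $\lim_{n\to\infty}R_n(\omega)/n=0$, \[\liminf_{r\to0}\frac{\log\nu(B(x,r))}{\log r}\ \ge\ \liminf_{n\to\infty}\frac{\log\mu(B_n(\omega))}{\log\prod_{\nu=1}^n b_{i_\nu}}.\] (ii) For every $x=\Pi(\omega)\in\Lambda$, \[\liminf_{r\to0}\frac{\log\nu(B(x,r))}{\log r}\ \le\ \liminf_{n\to\infty}\frac{\log\mu(B_n(\omega))}{\log\prod_{\nu=1}^n b_{i_\nu}}.\]
   Context: Standing setting (Lalley–Gatzouras system). Let $p\ge 1$ and $m_1,\dots,m_p\ge1$ be integers and $\mathcal{D}=\{(i,j):1\le i\le p,\ 1\le j\le m_i\}$. For $(i,j)\in\mathcal{D}$ let $S_{ij}(x)=\begin{pmatrix}a_{ij}&0\\0&b_i\end{pmatrix}x+\begin{pmatrix}c_{ij}\\ d_i\end{pmatrix}$ on $[0,1]^2$, where $0<a_{ij}\le b_i<1$, $0\le d_1\le\dots\le d_p<1$, $d_{i+1}-d_i\ge b_i$, $b_p+d_p\le 1$, and for each $i$: $0\le c_{i1}\le\dots\le c_{im_i}<1$, $c_{i(j+1)}-c_{ij}\ge a_{ij}$, $a_{im_i}+c_{im_i}\le1$. Let $\Sigma=\mathcal{D}^{\mathbb{N}}$, write $\omega=((i_\nu,j_\nu))_{\nu\ge1}$, $\Pi(\omega)=\lim_n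 S_{\omega_1}\circ\cdots\circ S_{\omega_n}([0,1]^2)$, $\Lambda=\Pi(\Sigma)$. Let $a_{\min}=\min_{(i,j)}a_{ij}$. Define $L_n(\omega)=\min\{l\ge1:\prod_{\nu=1}^l a_{i_\nu j_\nu}\le\prod_{\nu=1}^n b_{i_\nu}\}$ and the approximate symbolic square $B_n(\omega)=\{\omega'\in\Sigma:\omega'_\nu=\omega_\nu\ (1\le\nu\le L_n(\omega)),\ i'_\nu=i_\nu\ (L_n(\omega)<\nu\le n)\}$. $\mathcal{D}$ is called two-dimensional if there exist $(i_1,j_1),(i_2,j_2)\in\mathcal{D}$ with $i_1=i_2$, $j_1\ne j_2$, and there exist $(i_3,j_3),(i_4,j_4)\in\mathcal{D}$ with $i_3\ne i_4$. For $d\in\mathcal{D}$ let $R^d_n(\omega)=\min\{l>n:\omega_l=d\}-n$ and $R_n(\omega)=\max_{d\in\mathcal{D}}R^d_n(\omega)$. $B(x,r)$ is the closed (or open) ball in $\mathbb{R}^2$. *)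

From HB Require Import structures.
From mathcomp Require Import all_boot all_order all_algebra.
From mathcomp Require Import all_classical all_reals all_analysis.
Set Implicit Arguments. Unset Strict Implicit. Unset Printing Implicit Defensive.
Import Order.TTheory GRing.Theory Num.Theory.
Import numFieldTopology.Exports.
Local Open Scope classical_set_scope.
Local Open Scope ring_scope.

(* Conventions (0-based indices):
   p = P.+1 rows, row i (0 <= i <= P) has m_i = (M i).+1 maps;
   the digit set D = {(i,j) : i <= P, j <= M i}.
   Parameters a c : nat -> nat -> R, b d : nat -> R are only used on D. *)

Section LG0.
Variables (P : nat) (M : nat -> nat).

Definition digit := {i : 'I_P.+1 & 'I_(M i).+1}.

Definition digit0 : digit :=
  @Tagged _ ord0 (fun i : 'I_P.+1 => 'I_(M i).+1) ord0.

(* symbolic space Sigma = D^N ; omega k is the (k+1)-th symbol omega_{k+1} *)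
End LG0.

HB.instance Definition _ (P : nat) (M : nat -> nat) :=
  Finite.on (digit P M).
HB.instance Definition _ (P : nat) (M : nat -> nat) :=
  isPointed.Build (digit P M) (digit0 P M).

Section LG.
Variables (P : nat) (M : nat -> nat).

Definition Sig := nat -> digit P M.


(* cylinder sets: they generate the Borel sigma-algebra of the product
   topology of D^N (D discrete, finite) *)
Definition cylinders : set (set Sig) :=
  [set A | exists (n : nat) (w : Sig), A = [set w' | forall k, (k < n)%N -> w' k = w k]].

Definition SigB := g_sigma_algebraType cylinders.

End LG.

Section LGR.
Variables (R : realType) (P : nat) (M : nat -> nat).
Variables (a c : nat -> nat -> R) (b d : nat -> R).

Definition LG_system : Prop :=
  (forall i j, (i <= P)%N -> (j <= M i)%N -> 0 < a i j /\ a i j <= b i /\ b i < 1)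
  /\ (0 <= d 0%N
      /\ (forall i, (i < P)%N -> d i <= d i.+1 /\ b i <= d i.+1 - d i)
      /\ d P < 1 /\ b P + d P <= 1)
  /\ (forall i, (i <= P)%N ->
        0 <= c i 0%N
        /\ (forall j, (j < M i)%N -> c i j <= c i j.+1 /\ a i j <= c i j.+1 - c i j)
        /\ c i (M i) < 1 /\ a i (M i) + c i (M i) <= 1).

Definition aD (x : digit P M) : R := a (tag x) (tagged x).
Definition bD (x : digit P M) : R := b (tag x).
Definition cD (x : digit P M) : R := c (tag x) (tagged x).
Definition dD (x : digit P M) : R := d (tag x).

Definition Smap (x : digit P M) (z : R * R) : R * R :=
  (aD x * z.1 + cD x, bD x * z.2 + dD x).

(* compS w n = S_{w_1} o ... o S_{w_n} *)
Fixpoint compS (w : Sig P M) (n : nat) (z : R * R) : R * R :=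
  match n with
  | 0%N => z
  | n'.+1 => compS w n' (Smap (w n') z)
  end.

Definition unitsq : set (R * R) := [set z | 0 <= z.1 <= 1 /\ 0 <= z.2 <= 1].

(* Pi(w) = lim_n S_{w_1} o ... o S_{w_n}([0,1]^2), i.e. the (unique) point of
   the intersection of these nested compact rectangles *)
Definition Pi (w : Sig P M) : R * R :=
  xget (0, 0) [set x | forall n, (compS w n @` unitsq) x].

Definition ball2 (x : R * R) (r : R) : set (R * R) :=
  [set y | (y.1 - x.1) ^+ 2 + (y.2 - x.2) ^+ 2 <= r ^+ 2].

Definition prod_a (w : Sig P M) (l : nat) : R := \prod_(k < l) aD (w k).
Definition prod_b (w : Sig P M) (n : nat) : R := \prod_(k < n) bD (w k).

Definition Ln (w : Sig P M) (n : nat) : nat :=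
  xget 0%N [set l | (1 <= l)%N /\ prod_a w l <= prod_b w n /\
                    forall l', (1 <= l')%N -> prod_a w l' <= prod_b w n -> (l <= l')%N].

Definition Bn (w : Sig P M) (n : nat) : set (Sig P M) :=
  [set w' | (forall k, (k < Ln w n)%N -> w' k = w k) /\
            (forall k, (Ln w n <= k)%N -> (k < n)%N -> tag (w' k) = tag (w k))].

(* R^e_n(w) = min { l > n : w_l = e } - n  (+oo if there is no such l);
   in 0-based indexing w_l = w (l-1), so l > n  <->  k := l-1 >= n. *)
Definition Rd (w : Sig P M) (n : nat) (e : digit P M) : \bar R :=
  if pselect (exists k, (n <= k)%N /\ w k = e) then
    ((xget 0%N [set k | ((n <= k)%N /\ w k = e) /\
                  forall k', (n <= k')%N -> w k' = e -> (k <= k')%N]).+1 - n)%:R%:E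
  else +oo%E.

Definition Rn (w : Sig P M) (n : nat) : \bar R :=
  \big[Order.max/-oo%E]_(e : digit P M) Rd w n e.

Definition two_dimensional : Prop :=
  (exists x y : digit P M, tag x = tag y /\ x <> y) /\
  (exists x y : digit P M, tag x <> tag y).

End LGR.

Definition elog {R : realType} (x : \bar R) : \bar R :=
  match x with
  | r%:E => if (0 < r)%R then (ln r)%:E else -oo%E
  | +oo%E => +oo%E
  | -oo%E => -oo%E
  end.

(* Let rho_n = b_{i_1} ... b_{i_n}.  Fixing the first L_n digits and the
   first n rows confines Pi(B_n(w)) to a rectangle of width and height at
   most rho_n containing Pi w, so mu(B_n(w)) <= nu(B(Pi w, 2 rho_n)); this
   gives (ii).  Conversely, if every digit occurs within n/q steps after
   each time n >= N (a consequence of R_n/n -> 0), then Pi w stays at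
   distance at least C a_min^(n/q + 1) rho_n from the boundary of every
   rectangle prescribed by B_n(w); the constant C > 0 comes from digits
   whose images leave a gap on each side of the unit square, which exist
   because D is two-dimensional.  So the preimage of a ball of that radius
   lies in B_n(w), and the factor a_min^(n/q) changes log r only by
   O(n/q), negligible against log rho_n ~ n as q -> oo; this gives (i). *)

From HB Require Import structures.
From mathcomp Require Import all_boot all_order all_algebra.
From mathcomp Require Import all_classical all_reals all_analysis.
From mathcomp Require Import ring lra.
Import Order.TTheory GRing.Theory Num.Theory.
Import numFieldTopology.Exports.
Local Open Scope classical_set_scope.
Local Open Scope ring_scope.

Set Implicit Arguments. Unset Strict Implicit. Unset Printing Implicit Defensive.

Lemma digit_inj (P : nat) (M : nat -> nat) (x y : digit P M) :
  tag x = tag y -> (tagged x : nat) = tagged y -> x = y.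
Proof.
case: x => i j; case: y => i' j' /= ei; subst i' => e.
by have -> : j = j' by apply: val_inj.
Qed.

Section StandingAssumptions.
Variables (R : realType) (P : nat) (M : nat -> nat) (a c : nat -> nat -> R) (b d : nat -> R).
Hypothesis HLG : LG_system P M a c b d.
Local Notation digit := (digit P M).

Lemma c_homo i : (i <= P)%N -> forall j k, (j <= k)%N -> (k <= M i)%N -> c i j <= c i k.
Proof.
move=> iP j k jk kM; elim: k jk kM => [|k IH] jk kM.
  by move: jk; rewrite leqn0 => /eqP ->.
case: HLG => _ [_ /(_ i iP) [_ [Hc _]]].
move: jk; rewrite leq_eqVlt => /orP[/eqP -> //|]; rewrite ltnS => jk.
exact: le_trans (IH jk (ltnW kM)) (Hc k kM).1.
Qed.

Lemma c_add_a_le i : (i <= P)%N -> forall j k, (j < k)%N -> (k <= M i)%N ->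
  c i j + a i j <= c i k.
Proof.
move=> iP j k jk kM.
case: HLG => _ [_ /(_ i iP) [_ [Hc _]]].
have [h1 h2] := Hc j (leq_trans jk kM).
have := c_homo iP jk kM; lra.
Qed.

Lemma d_homo j k : (j <= k)%N -> (k <= P)%N -> d j <= d k.
Proof.
move=> jk kP; elim: k jk kP => [|k IH] jk kP.
  by move: jk; rewrite leqn0 => /eqP ->.
case: HLG => _ [[_ [Hd _]] _].
move: jk; rewrite leq_eqVlt => /orP[/eqP -> //|]; rewrite ltnS => jk.
exact: le_trans (IH jk (ltnW kP)) (Hd k kP).1.
Qed.

Lemma d_add_b_le j k : (j < k)%N -> (k <= P)%N -> d j + b j <= d k.
Proof.
move=> jk kP.
case: HLG => _ [[_ [Hd _]] _].
have [h1 h2] := Hd j (leq_trans jk kP).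
have := d_homo jk kP; lra.
Qed.

Lemma tag_le (x : digit) : (tag x <= P)%N.
Proof. by rewrite -ltnS ltn_ord. Qed.

Lemma tagged_le (x : digit) : (tagged x <= M (tag x))%N.
Proof. by rewrite -ltnS ltn_ord. Qed.

Lemma aD_gt0 (x : digit) : 0 < aD a x.
Proof. by case: HLG => /(_ _ _ (tag_le x) (tagged_le x)) []. Qed.

Lemma aD_le_bD (x : digit) : aD a x <= bD b x.
Proof. by case: HLG => /(_ _ _ (tag_le x) (tagged_le x)) [_ []]. Qed.

Lemma bD_lt1 (x : digit) : bD b x < 1.
Proof. by case: HLG => /(_ _ _ (tag_le x) (tagged_le x)) [_ []]. Qed.

Lemma bD_gt0 (x : digit) : 0 < bD b x.
Proof. exact: lt_le_trans (aD_gt0 x) (aD_le_bD x). Qed.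

Lemma aD_lt1 (x : digit) : aD a x < 1.
Proof. exact: le_lt_trans (aD_le_bD x) (bD_lt1 x). Qed.

Lemma cD_ge0 (x : digit) : 0 <= cD c x.
Proof.
case: HLG => _ [_ /(_ _ (tag_le x)) [h0 _]].
exact: le_trans h0 (c_homo (tag_le x) (leq0n _) (tagged_le x)).
Qed.

Lemma dD_ge0 (x : digit) : 0 <= dD d x.
Proof.
case: HLG => _ [[h0 _] _].
exact: le_trans h0 (d_homo (leq0n _) (tag_le x)).
Qed.

Lemma aD_add_cD_le1 (x : digit) : aD a x + cD c x <= 1.
Proof.
have := HLG => -[_ [_ /(_ _ (tag_le x)) [_ [_ [_ h]]]]].
rewrite /aD /cD; have := tagged_le x.
rewrite leq_eqVlt => /orP[/eqP ->|lt]; first lra.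
have := c_add_a_le (tag_le x) lt (leqnn _).
have [+ _] := HLG.1 _ _ (tag_le x) (leqnn (M (tag x))); lra.
Qed.

Lemma bD_add_dD_le1 (x : digit) : bD b x + dD d x <= 1.
Proof.
have := HLG => -[_ [[_ [_ [_ h]]] _]].
rewrite /bD /dD; have := tag_le x.
rewrite leq_eqVlt => /orP[/eqP ->|lt]; first lra.
have := d_add_b_le lt (leqnn _).
have [+ [+ _]] := HLG.1 P 0 (leqnn _) (leq0n _); lra.
Qed.

Lemma cD_lt1 (x : digit) : cD c x < 1.
Proof. have := aD_add_cD_le1 x; have := aD_gt0 x; lra. Qed.

Lemma dD_lt1 (x : digit) : dD d x < 1.
Proof. have := bD_add_dD_le1 x; have := bD_gt0 x; lra. Qed.

Lemma cD_add_aD_le (x y : digit) : tag x = tag y -> (tagged x < tagged y)%N ->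
  cD c x + aD a x <= cD c y.
Proof.
case: x => i j; case: y => i' j' /= ei; subst i' => lt.
have iP : (i <= P)%N by rewrite -ltnS ltn_ord.
have jM : (j' <= M i)%N by rewrite -ltnS ltn_ord.
by rewrite /cD /aD /=; exact: (c_add_a_le iP lt jM).
Qed.

End StandingAssumptions.

Section NestedIntervals.
Variables (R : realType) (t p : nat -> R).
Hypothesis p_ge0 : forall n, 0 <= p n.
Hypothesis t_leS : forall n, t n <= t n.+1.
Hypothesis tp_geS : forall n, t n.+1 + p n.+1 <= t n + p n.

Lemma nested_left_homo n m : (n <= m)%N -> t n <= t m.
Proof.
move=> /subnK <-; elim: (m - n)%N => [|k IH]; first by rewrite add0n.
by apply: le_trans IH _; rewrite addSn.
Qed.

Lemma nested_right_homo n m : (n <= m)%N -> t m + p m <= t n + p n.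
Proof.
move=> /subnK <-; elim: (m - n)%N => [|k IH]; first by rewrite add0n.
by apply: le_trans _ IH; rewrite addSn.
Qed.

Lemma sup_nested_in n : t n <= sup (range t) <= t n + p n.
Proof.
have tle m : t m <= t m + p m by rewrite lerDl.
have ub : ubound (range t) (t n + p n).
  move=> _ [m _ <-]; case: (leqP n m) => nm.
    exact: le_trans (tle m) (nested_right_homo nm).
  exact: le_trans (nested_left_homo (ltnW nm)) (tle n).
apply/andP; split.
  by apply: ub_le_sup; [exists (t n + p n) | exists n].
by apply: ge_sup => //; exists (t 0%N), 0%N.
Qed.

End NestedIntervals.

Section Rectangles.
Variables (R : realType) (P : nat) (M : nat -> nat) (a c : nat -> nat -> R) (b d : nat -> R).
Hypothesis HLG : LG_system P M a c b d.
Local Notation Sig := (Sig P M).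
Local Notation Pi := (Pi a c b d).

(* [S_{w_1} o ... o S_{w_n}([0,1]^2)] is the rectangle with lower left
   corner [(corner1 w n, corner2 w n)] and sides [prod_a w n], [prod_b w n]. *)
Definition corner1 (w : Sig) n := (compS a c b d w n (0, 0)).1.
Definition corner2 (w : Sig) n := (compS a c b d w n (0, 0)).2.

Lemma prod_a0 (w : Sig) : prod_a a w 0 = 1.
Proof. by rewrite /prod_a big_ord0. Qed.

Lemma prod_b0 (w : Sig) : prod_b b w 0 = 1.
Proof. by rewrite /prod_b big_ord0. Qed.

Lemma prod_aS (w : Sig) n : prod_a a w n.+1 = prod_a a w n * aD a (w n).
Proof. by rewrite /prod_a big_ord_recr. Qed.

Lemma prod_bS (w : Sig) n : prod_b b w n.+1 = prod_b b w n * bD b (w n).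
Proof. by rewrite /prod_b big_ord_recr. Qed.

Lemma compSE (w : Sig) n z : compS a c b d w n z =
  (corner1 w n + prod_a a w n * z.1, corner2 w n + prod_b b w n * z.2).
Proof.
elim: n z => [|n IH] z.
  by rewrite /corner1 /corner2 prod_a0 prod_b0 /= !add0r !mul1r; case: z.
have -> : corner1 w n.+1 = corner1 w n + prod_a a w n * cD c (w n).
  by rewrite {1}/corner1 /= IH /Smap /= mulr0 add0r.
have -> : corner2 w n.+1 = corner2 w n + prod_b b w n * dD d (w n).
  by rewrite {1}/corner2 /= IH /Smap /= mulr0 add0r.
by rewrite /= IH /Smap /= prod_aS prod_bS; congr (_, _); ring.
Qed.

Lemma corner1S (w : Sig) n : corner1 w n.+1 = corner1 w n + prod_a a w n * cD c (w n).
Proof. by rewrite {1}/corner1 /= compSE /Smap /= mulr0 add0r. Qed.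

Lemma corner2S (w : Sig) n : corner2 w n.+1 = corner2 w n + prod_b b w n * dD d (w n).
Proof. by rewrite {1}/corner2 /= compSE /Smap /= mulr0 add0r. Qed.

Lemma prod_a_gt0 (w : Sig) n : 0 < prod_a a w n.
Proof.
by elim: n => [|n IH]; rewrite ?prod_a0 ?prod_aS ?mulr_gt0 ?(aD_gt0 HLG).
Qed.

Lemma prod_b_gt0 (w : Sig) n : 0 < prod_b b w n.
Proof.
by elim: n => [|n IH]; rewrite ?prod_b0 ?prod_bS ?mulr_gt0 ?(bD_gt0 HLG).
Qed.

Lemma prod_a_le_prod_b (w : Sig) n : prod_a a w n <= prod_b b w n.
Proof.
elim: n => [|n IH]; rewrite ?prod_a0 ?prod_b0 // prod_aS prod_bS.
by apply: ler_pM => //; [exact/ltW/prod_a_gt0|exact/ltW/(aD_gt0 HLG)|exact: (aD_le_bD HLG)].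
Qed.

Lemma prod_b_le1 (w : Sig) n : prod_b b w n <= 1.
Proof.
elim: n => [|n IH]; rewrite ?prod_b0 // prod_bS -[1]mulr1.
by apply: ler_pM => //; [exact/ltW/prod_b_gt0|exact/ltW/(bD_gt0 HLG)|exact/ltW/(bD_lt1 HLG)].
Qed.

Lemma corner1_leS (w : Sig) n : corner1 w n <= corner1 w n.+1.
Proof. by rewrite corner1S lerDl mulr_ge0 ?(cD_ge0 HLG) // ltW // prod_a_gt0. Qed.

Lemma corner2_leS (w : Sig) n : corner2 w n <= corner2 w n.+1.
Proof. by rewrite corner2S lerDl mulr_ge0 ?(dD_ge0 HLG) // ltW // prod_b_gt0. Qed.

Lemma edge1_geS (w : Sig) n :
  corner1 w n.+1 + prod_a a w n.+1 <= corner1 w n + prod_a a w n.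
Proof.
rewrite corner1S prod_aS -addrA lerD2l -mulrDr ger_pMr ?prod_a_gt0 // addrC.
exact: (aD_add_cD_le1 HLG).
Qed.

Lemma edge2_geS (w : Sig) n :
  corner2 w n.+1 + prod_b b w n.+1 <= corner2 w n + prod_b b w n.
Proof.
rewrite corner2S prod_bS -addrA lerD2l -mulrDr ger_pMr ?prod_b_gt0 // addrC.
exact: (bD_add_dD_le1 HLG).
Qed.

Lemma corner1_homo (w : Sig) n m : (n <= m)%N -> corner1 w n <= corner1 w m.
Proof. by move=> nm; exact: (nested_left_homo (corner1_leS w) nm). Qed.

Lemma corner2_homo (w : Sig) n m : (n <= m)%N -> corner2 w n <= corner2 w m.
Proof. by move=> nm; exact: (nested_left_homo (corner2_leS w) nm). Qed.

Lemma edge1_homo (w : Sig) n m : (n <= m)%N ->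
  corner1 w m + prod_a a w m <= corner1 w n + prod_a a w n.
Proof. by move=> nm; exact: (nested_right_homo (edge1_geS w) nm). Qed.

Lemma edge2_homo (w : Sig) n m : (n <= m)%N ->
  corner2 w m + prod_b b w m <= corner2 w n + prod_b b w n.
Proof. by move=> nm; exact: (nested_right_homo (edge2_geS w) nm). Qed.

Lemma Pi_in_rect (w : Sig) n :
  (corner1 w n <= (Pi w).1 <= corner1 w n + prod_a a w n) /\
  (corner2 w n <= (Pi w).2 <= corner2 w n + prod_b b w n).
Proof.
pose p1 := sup (range (corner1 w)); pose p2 := sup (range (corner2 w)).
have H1 m := sup_nested_in (fun k => ltW (prod_a_gt0 w k)) (corner1_leS w) (edge1_geS w) m.
have H2 m := sup_nested_in (fun k => ltW (prod_b_gt0 w k)) (corner2_leS w) (edge2_geS w) m.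
have ex : exists x, forall n, (compS a c b d w n @` @unitsq R) x.
  exists (p1, p2) => m.
  exists ((p1 - corner1 w m) / prod_a a w m, (p2 - corner2 w m) / prod_b b w m).
    have pa0 := prod_a_gt0 w m; have pb0 := prod_b_gt0 w m.
    move: (H1 m) (H2 m) => /andP[h1 h1'] /andP[h2 h2'].
    rewrite /unitsq /=; split; apply/andP; split.
    - by apply: divr_ge0; rewrite ?subr_ge0 // ltW.
    - by rewrite ler_pdivrMr // mul1r lerBlDl.
    - by apply: divr_ge0; rewrite ?subr_ge0 // ltW.
    - by rewrite ler_pdivrMr // mul1r lerBlDl.
  rewrite compSE /= [prod_a _ _ _ * _]mulrC [prod_b _ _ _ * _]mulrC.
  by rewrite !divfK ?gt_eqF ?prod_a_gt0 ?prod_b_gt0 // !subrKC.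
have := xgetPex (0, 0) ex; rewrite -/(Pi w).
move=> /(_ n) [z [/andP[z10 z11] /andP[z20 z21]]].
rewrite compSE => <- /=; split; apply/andP; split.
- by rewrite lerDl mulr_ge0 // ltW // prod_a_gt0.
- by rewrite lerD2l ger_pMr ?prod_a_gt0.
- by rewrite lerDl mulr_ge0 // ltW // prod_b_gt0.
- by rewrite lerD2l ger_pMr ?prod_b_gt0.
Qed.

Lemma corner1_prefix (w w' : Sig) n : (forall k, (k < n)%N -> w' k = w k) ->
  corner1 w' n = corner1 w n /\ prod_a a w' n = prod_a a w n.
Proof.
elim: n => [|n IH] h; first by rewrite !prod_a0.
have [e1 e2] : corner1 w' n = corner1 w n /\ prod_a a w' n = prod_a a w n.
  by apply: IH => k kn; apply: h; rewrite ltnS ltnW.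
by rewrite corner1S prod_aS corner1S prod_aS e1 e2 h.
Qed.

Lemma corner2_prefix (w w' : Sig) n : (forall k, (k < n)%N -> tag (w' k) = tag (w k)) ->
  corner2 w' n = corner2 w n /\ prod_b b w' n = prod_b b w n.
Proof.
elim: n => [|n IH] h; first by rewrite !prod_b0.
have [e1 e2] : corner2 w' n = corner2 w n /\ prod_b b w' n = prod_b b w n.
  by apply: IH => k kn; apply: h; rewrite ltnS ltnW.
by rewrite corner2S prod_bS corner2S prod_bS e1 e2 /dD /bD h.
Qed.

End Rectangles.

Section Measurability.
Variables (P : nat) (M : nat -> nat).
Local Notation Sig := (Sig P M).
Local Notation digit := (digit P M).

Lemma cylinder_measurable (w : Sig) n :
  measurable ([set w' | forall k, (k < n)%N -> w' k = w k] : set (SigB P M)).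
Proof. by apply: sub_sigma_algebra; exists n, w. Qed.

Definition extend_word n (f : {ffun 'I_n -> digit}) : Sig :=
  fun k => if insub k is Some i then f i else digit0 P M.

Lemma extend_wordE n (f : {ffun 'I_n -> digit}) (i : 'I_n) : extend_word f i = f i.
Proof. by rewrite /extend_word valK. Qed.

(* a set of words determined by the first n symbols is a finite union of cylinders *)
Lemma determined_measurable n (A : set Sig) :
  (forall w w', (forall k, (k < n)%N -> w' k = w k) -> A w -> A w') ->
  measurable (A : set (SigB P M)).
Proof.
move=> hA.
pose D := [set f : {ffun 'I_n -> digit} | exists w, A w /\ forall i : 'I_n, f i = w i].
have -> : A = \bigcup_(f in D) [set w' : Sig | forall k, (k < n)%N -> w' k = extend_word f k].
  apply/seteqP; split => [w Aw|w' [f [w [Aw fw]] hw']].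
    exists [ffun i : 'I_n => w i]; first by exists w; split => // i; rewrite ffunE.
    by move=> k kn /=; rewrite -[k]/(val (Ordinal kn)) extend_wordE ffunE.
  by apply: hA Aw => k kn; rewrite hw' // -[k]/(val (Ordinal kn)) extend_wordE fw.
apply: fin_bigcup_measurable; first exact: finite_finset.
by move=> f _; exact: cylinder_measurable.
Qed.

End Measurability.

Lemma expr_lt_eventually (R : realType) (x e : R) : 0 <= x < 1 -> 0 < e ->
  exists N, forall n, (N <= n)%N -> x ^+ n < e.
Proof.
move=> /andP[x0 x1] e0.
have x1' : `|x| < 1 by rewrite ger0_norm.
have [N _ HN] := cvgr0_norm_lt _ (cvg_expr x1') e e0.
by exists N => n /HN /=; rewrite ger0_norm // exprn_ge0.
Qed.

Section Scales.
Variables (R : realType) (P : nat) (M : nat -> nat) (a c : nat -> nat -> R) (b d : nat -> R).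
Hypothesis HLG : LG_system P M a c b d.
Local Notation Sig := (Sig P M).
Local Notation digit := (digit P M).

Definition bmax : R := \big[Order.max/0]_(x : digit) bD b x.
Definition amin : R := \big[Order.min/1]_(x : digit) aD a x.

Lemma bD_le_bmax (x : digit) : bD b x <= bmax.
Proof. exact: le_bigmax. Qed.

Lemma amin_le_aD (x : digit) : amin <= aD a x.
Proof. exact: bigmin_le. Qed.

Lemma amin_le_bD (x : digit) : amin <= bD b x.
Proof. exact: le_trans (amin_le_aD x) (aD_le_bD HLG x). Qed.

Lemma bmax_gt0 : 0 < bmax.
Proof. exact: lt_le_trans (bD_gt0 HLG (digit0 P M)) (bD_le_bmax _). Qed.

Lemma bmax_lt1 : bmax < 1.
Proof.
apply: (big_ind (fun v => v < 1)) => //; first by move=> x y; rewrite gt_max => -> ->.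
by move=> x _; exact: (bD_lt1 HLG).
Qed.

Lemma amin_gt0 : 0 < amin.
Proof.
apply: (big_ind (fun v => 0 < v)) => //; first by move=> x y; rewrite lt_min => -> ->.
by move=> x _; exact: (aD_gt0 HLG).
Qed.

Lemma amin_lt1 : amin < 1.
Proof. exact: le_lt_trans (amin_le_bD (digit0 P M)) (bD_lt1 HLG _). Qed.

Lemma prod_b_le_bmax (w : Sig) n : prod_b b w n <= bmax ^+ n.
Proof.
elim: n => [|n IH]; first by rewrite prod_b0.
rewrite prod_bS exprSr; apply: ler_pM => //.
- exact/ltW/(prod_b_gt0 HLG).
- exact/ltW/(bD_gt0 HLG).
- exact: bD_le_bmax.
Qed.

Lemma prod_a_amin_le (w : Sig) n m : (n <= m)%N ->
  prod_a a w n * amin ^+ (m - n) <= prod_a a w m.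
Proof.
move=> /subnK <-; rewrite addnK; elim: (m - n)%N => [|k IH].
  by rewrite expr0 mulr1 add0n.
rewrite addSn prod_aS exprSr mulrA; apply: ler_pM => //.
- by rewrite mulr_ge0 ?exprn_ge0 ?ltW ?amin_gt0 ?(prod_a_gt0 HLG).
- exact/ltW/amin_gt0.
- exact: amin_le_aD.
Qed.

Lemma prod_b_amin_le (w : Sig) n m : (n <= m)%N ->
  prod_b b w n * amin ^+ (m - n) <= prod_b b w m.
Proof.
move=> /subnK <-; rewrite addnK; elim: (m - n)%N => [|k IH].
  by rewrite expr0 mulr1 add0n.
rewrite addSn prod_bS exprSr mulrA; apply: ler_pM => //.
- by rewrite mulr_ge0 ?exprn_ge0 ?ltW ?amin_gt0 ?(prod_b_gt0 HLG).
- exact/ltW/amin_gt0.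
- exact: amin_le_bD.
Qed.

Lemma prod_b_small e : 0 < e ->
  exists N, forall (w : Sig) n, (N <= n)%N -> prod_b b w n < e.
Proof.
move=> e0; have hb : 0 <= bmax < 1 by rewrite ltW ?bmax_gt0 ?bmax_lt1.
have [N HN] := expr_lt_eventually hb e0.
by exists N => w n Nn; exact: le_lt_trans (prod_b_le_bmax w n) (HN n Nn).
Qed.

Lemma Ln_spec (w : Sig) n :
  [/\ (1 <= Ln a b w n)%N, prod_a a w (Ln a b w n) <= prod_b b w n &
   forall l, (1 <= l)%N -> prod_a a w l <= prod_b b w n -> (Ln a b w n <= l)%N].
Proof.
have exP : exists l, (1 <= l)%N && (prod_a a w l <= prod_b b w n).
  exists n.+1; rewrite /= prod_aS; apply: le_trans (prod_a_le_prod_b HLG w n).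
  by rewrite ger_pMr ?(prod_a_gt0 HLG) // ltW // (aD_lt1 HLG).
have ex : exists l, [set l | (1 <= l)%N /\ prod_a a w l <= prod_b b w n /\
    forall l', (1 <= l')%N -> prod_a a w l' <= prod_b b w n -> (l <= l')%N] l.
  case: (ex_minnP exP) => l /andP[l1 l2] lmin; exists l; do 2!split => //.
  by move=> l' h1 h2; apply: lmin; rewrite h1 h2.
by have [h1 [h2 h3]] := xgetPex 0%N ex; split.
Qed.

Lemma Ln_le (w : Sig) n : (1 <= n)%N -> (Ln a b w n <= n)%N.
Proof. by move=> n1; have [_ _ ->] := Ln_spec w n; rewrite ?(prod_a_le_prod_b HLG). Qed.

Lemma amin_prod_b_le_prod_a_Ln (w : Sig) n :
  amin * prod_b b w n <= prod_a a w (Ln a b w n).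
Proof.
have [+ _ Lmin] := Ln_spec w n; case E: (Ln a b w n) => [|[|l]] // _.
  rewrite prod_aS prod_a0 mul1r; apply: le_trans (amin_le_aD _).
  by rewrite ger_pMr ?amin_gt0 ?(prod_b_le1 HLG).
have hl : prod_b b w n < prod_a a w l.+1.
  by rewrite ltNge; apply/negP => /(Lmin _ (ltn0Sn l)); rewrite E ltnn.
rewrite prod_aS mulrC; apply: ler_pM.
- exact/ltW/(prod_b_gt0 HLG).
- exact/ltW/amin_gt0.
- exact: ltW.
- exact: amin_le_aD.
Qed.

Lemma Ln_ge (w : Sig) n K : prod_b b w n < amin ^+ K -> (K <= Ln a b w n)%N.
Proof.
move=> small; rewrite leqNgt; apply/negP => lt.
have [_ hL _] := Ln_spec w n.
have := prod_a_amin_le w (leq0n (Ln a b w n)); rewrite prod_a0 mul1r subn0.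
have : amin ^+ K <= amin ^+ (Ln a b w n).
  by apply: ler_wiXn2l; [exact/ltW/amin_gt0|exact/ltW/amin_lt1|exact: ltnW].
lra.
Qed.

Lemma Bn_measurable (w : Sig) n : measurable (Bn a b w n : set (SigB P M)).
Proof.
apply: (@determined_measurable _ _ (maxn (Ln a b w n) n)) => w1 w2 h [B1 B2]; split.
  by move=> k kL; rewrite h ?B1 // (leq_trans kL) // leq_maxl.
by move=> k Lk kn; rewrite h ?B2 // (leq_trans kn) // leq_maxr.
Qed.

End Scales.

Lemma sqr_le_shift (R : realType) (u v e K : R) : 0 <= e ->
  -e <= u - v <= e -> -K <= v <= K -> u ^+ 2 <= v ^+ 2 + e * (2 * K + e).
Proof. move=> h0 /andP[h1 h2] /andP[h3 h4]; nra. Qed.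

Lemma sqr_le_bound (R : realType) (v K : R) : 0 <= K -> v ^+ 2 <= K ^+ 2 -> -K <= v <= K.
Proof. by move=> h0 h1; apply/andP; split; nra. Qed.

Section BallPreimage.
Variables (R : realType) (P : nat) (M : nat -> nat) (a c : nat -> nat -> R) (b d : nat -> R).
Hypothesis HLG : LG_system P M a c b d.
Local Notation Sig := (Sig P M).
Local Notation Pi := (Pi a c b d).
Local Notation corner1 := (corner1 a c b d).
Local Notation corner2 := (corner2 a c b d).

Definition rect_meets_ball (x : R * R) (r : R) m : set Sig :=
  [set w | exists z : R * R,
     [/\ corner1 w m <= z.1 <= corner1 w m + prod_a a w m,
         corner2 w m <= z.2 <= corner2 w m + prod_b b w m & ball2 x r z]].

(* the rectangles shrink to Pi w, and the closed ball is closed *)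
Lemma preimage_ball2E (x : R * R) (r : R) :
  Pi @^-1` ball2 x r = \bigcap_m rect_meets_ball x r m.
Proof.
apply/seteqP; split => [w hw m _|w hw].
  by exists (Pi w); have [h1 h2] := Pi_in_rect HLG w m.
rewrite /ball2 /=; set g := _ + _.
pose K := `|r|; have K0 : 0 <= K := normr_ge0 r.
have rK : r ^+ 2 = K ^+ 2 by rewrite /K real_normK ?num_real.
rewrite leNgt; apply/negP => hg.
pose e := Num.min 1 ((g - r ^+ 2) / (4 * K + 2)).
have e0 : 0 < e by rewrite /e lt_min ltr01 divr_gt0 ?subr_gt0 //; lra.
have [N HN] := prod_b_small HLG e0.
have [z [/andP[z1 z1'] /andP[z2 z2'] zb]] := hw N I.
have [/andP[q1 q1'] /andP[q2 q2']] := Pi_in_rect HLG w N.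
have pab := prod_a_le_prod_b HLG w N.
have := HN w N (leqnn N); have := prod_b_gt0 HLG w N.
move: (prod_b b w N) pab q2' z2' => δ pab q2' z2' δ0 δe.
rewrite /ball2 /= in zb.
have v1K : -K <= z.1 - x.1 <= K.
  by apply: sqr_le_bound => //; rewrite -rK; apply: le_trans zb; rewrite lerDl sqr_ge0.
have v2K : -K <= z.2 - x.2 <= K.
  by apply: sqr_le_bound => //; rewrite -rK; apply: le_trans zb; rewrite lerDr sqr_ge0.
have h1 : ((Pi w).1 - x.1) ^+ 2 <= (z.1 - x.1) ^+ 2 + δ * (2 * K + δ).
  by apply: sqr_le_shift v1K; [exact: ltW|apply/andP; split; lra].
have h2 : ((Pi w).2 - x.2) ^+ 2 <= (z.2 - x.2) ^+ 2 + δ * (2 * K + δ).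
  by apply: sqr_le_shift v2K; [exact: ltW|apply/andP; split; lra].
have δ1 : δ <= 1 by apply/ltW/(lt_le_trans δe); rewrite /e ge_min lexx.
have δη : δ * (4 * K + 2) < g - r ^+ 2.
  by rewrite -ltr_pdivlMr; [apply: (lt_le_trans δe); rewrite /e ge_min lexx orbT|lra].
have : g <= r ^+ 2 + δ * (4 * K + 2) by rewrite /g; nra.
lra.
Qed.

Lemma preimage_ball2_measurable (x : R * R) (r : R) :
  measurable (Pi @^-1` ball2 x r : set (SigB P M)).
Proof.
rewrite preimage_ball2E; apply: bigcapT_measurable => m.
apply: (@determined_measurable _ _ m) => w1 w2 h [z [hz1 hz2 hz]]; exists z.
have [e1 e2] := corner1_prefix a c b d h.
have [e3 e4] := corner2_prefix a c b d (fun k kn => congr1 tag (h k kn)).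
by rewrite e1 e2 e3 e4.
Qed.

End BallPreimage.

Section LiminfBounds.
Variables (R : realType) (T : choiceType) (X : filteredType T).
Local Open Scope ereal_scope.

Lemma lt_limf_einf (f : X -> \bar R) (F : set_system X) (t : \bar R) :
  t < limf_einf f F -> exists2 V, F V & forall x, V x -> t < f x.
Proof.
rewrite limf_einfE => /ereal_sup_gt [_ [V FV <-] h].
exists V => // x Vx; apply: lt_le_trans h _.
by apply: ereal_inf_lbound; exists x.
Qed.

Lemma limf_einf_ge (f : X -> \bar R) (F : set_system X) (t : \bar R) V :
  F V -> (forall x, V x -> t <= f x) -> t <= limf_einf f F.
Proof.
move=> FV h; rewrite limf_einfE; apply: (@le_trans _ _ (ereal_inf (f @` V))).
  by apply: le_ereal_inf_tmp => _ [x Vx <-]; exact: h.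
by apply: ereal_sup_ubound; exists V.
Qed.

End LiminfBounds.

Lemma lee_real_bounds (R : realType) (x y : \bar R) :
  (forall t : R, t%:E < x -> t%:E <= y)%E -> (x <= y)%E.
Proof.
move=> h; rewrite leNgt; apply/negP; move: h.
case: x => [x| |]; case: y => [y| |] h yx //.
- rewrite lte_fin in yx.
  have := h ((x + y) / 2); rewrite !lte_fin lee_fin; lra.
- have : ((x - 1)%:E < x%:E)%E by rewrite lte_fin; lra.
  by move/h; rewrite leeNy_eq.
- by have := h (y + 1) (ltry _); rewrite lee_fin; lra.
- by have := h 0 (ltry _); rewrite leeNy_eq.
Qed.

(* If [x = 0] the conclusion holds because then [elog x * L2^-1 = +oo]. *)
Lemma elog_ratio_transfer (R : realType) (x y : \bar R) (L1 L2 t s : R) :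
  x \is a fin_num -> y \is a fin_num -> (x <= y)%E -> L2 < 0 ->
  (forall u v : R, 0 < u -> u <= v -> t < ln v / L1 -> s <= ln u / L2) ->
  (t%:E < elog y * L1^-1%:E)%E -> (s%:E <= elog x * L2^-1%:E)%E.
Proof.
case: x => [u| |] //; case: y => [v| |] // _ _; rewrite lee_fin => uv L20 h.
have [u0|u0] := ltP 0 u; last first.
  have -> : elog u%:E = -oo%E by rewrite /elog ltNge u0.
  by rewrite lt0_mulNye ?leey // lte_fin invr_lt0.
have v0 : 0 < v := lt_le_trans u0 uv.
by rewrite /elog u0 v0 -!EFinM lte_fin lee_fin; exact: h.
Qed.

Lemma ln_lt_of_lt_expR (R : realType) (x k : R) : 0 < x -> x < expR k -> ln x < k.
Proof. by move=> x0 xk; rewrite -[k in _ < k]expRK ltr_ln ?posrE ?expR_gt0. Qed.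

Lemma ln_ratio_shift (R : realType) (lu lv l2 lr t e : R) :
  0 < l2 -> lr < 0 -> l2 + lr < 0 -> lu <= lv -> t < lv / (l2 + lr) ->
  lr * e <= - (`|t| * l2) -> 0 < e -> t - e <= lu / lr.
Proof.
move=> h2 hr h2r huv ht he e0.
rewrite ltr_ndivlMr // in ht; rewrite ler_ndivlMr //.
have : t * l2 <= `|t| * l2 by rewrite ler_wpM2r ?ler_norm // ltW.
nra.
Qed.

Section UpperBound.
Variables (R : realType) (P : nat) (M : nat -> nat) (a c : nat -> nat -> R) (b d : nat -> R).
Hypothesis HLG : LG_system P M a c b d.
Variable mu : {finite_measure set (SigB P M) -> \bar R}.
Local Notation Sig := (Sig P M).
Local Notation Pi := (Pi a c b d).

Lemma Bn_sub_preimage_ball2 (w : Sig) n :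
  Bn a b w n `<=` Pi @^-1` ball2 (Pi w) (2 * prod_b b w n).
Proof.
move=> w' [B1 B2]; rewrite /ball2 /=.
set L := Ln a b w n.
have [e1 e2] := corner1_prefix a c b d B1.
have [e3 e4] : corner2 a c b d w' n = corner2 a c b d w n /\ prod_b b w' n = prod_b b w n.
  by apply: corner2_prefix => k kn; case: (ltnP k L) => kL; [rewrite B1|exact: B2].
have [/andP[p1 p1'] _] := Pi_in_rect HLG w L.
have [/andP[q1 q1'] _] := Pi_in_rect HLG w' L.
have [_ /andP[p2 p2']] := Pi_in_rect HLG w n.
have [_ /andP[q2 q2']] := Pi_in_rect HLG w' n.
have [_ hL _] := Ln_spec HLG w n.
rewrite e1 e2 in q1 q1'; rewrite e3 e4 in q2 q2'.
set ρ := prod_b b w n in hL p2' q2' *.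
have /andP[h1 h1'] : -ρ <= (Pi w').1 - (Pi w).1 <= ρ by apply/andP; split; lra.
have /andP[h2 h2'] : -ρ <= (Pi w').2 - (Pi w).2 <= ρ by apply/andP; split; lra.
nra.
Qed.

Lemma limf_einf_ball2_le_limn_einf_Bn (w : Sig) :
  (limf_einf (fun r : R => elog (mu (Pi @^-1` ball2 (Pi w) r)) * (ln r)^-1%:E)
     (0 : R)^'+ <=
   limn_einf (fun n => elog (mu (Bn a b w n)) * (ln (prod_b b w n))^-1%:E))%E.
Proof.
apply: lee_real_bounds => t /lt_limf_einf [V [e /= e0 He] HV].
apply/lee_addgt0Pr => ε ε0; rewrite -leeBlDr // -EFinB.
pose c0 := Num.min (e / 2) (Num.min (1 / 2) (expR (- (`|t| * ln 2) / ε))).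
have c00 : 0 < c0 by rewrite !lt_min expR_gt0 !divr_gt0.
have [N HN] := prod_b_small HLG c00.
apply: (@limf_einf_ge _ _ _ _ _ _ [set n | (N <= n)%N]); first by exists N.
move=> n /= /(HN w); rewrite !lt_min => /andP[ρe /andP[ρh ρx]].
have ρ0 := prod_b_gt0 HLG w n; set ρ := prod_b b w n in ρ0 ρe ρh ρx *.
have Ht : V (2 * ρ).
  apply: He; last by rewrite mulr_gt0.
  by rewrite /ball_ /= sub0r normrN gtr0_norm ?mulr_gt0 //; lra.
have mB := Bn_measurable a b w n.
have mball := preimage_ball2_measurable HLG (Pi w) (2 * ρ).
apply: elog_ratio_transfer (HV _ Ht); rewrite ?fin_num_measure //.
- exact: le_measure (mem_set mB) (mem_set mball) (@Bn_sub_preimage_ball2 w n).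
- by rewrite ln_lt0 // ρ0; lra.
move=> u v u0 uv; have ln2 : 0 < ln (2 : R) by rewrite ln_gt0 //; lra.
rewrite lnM ?posrE ?ltr0n // => ht.
apply: (ln_ratio_shift ln2 _ _ _ ht) => //.
- by rewrite ln_lt0 // ρ0; lra.
- by rewrite -lnM ?posrE ?ln_lt0 //; lra.
- by rewrite ler_ln ?posrE //; exact: lt_le_trans uv.
- have := ln_lt_of_lt_expR ρ0 ρx; rewrite ltr_pdivlMr // => h; exact: ltW.
Qed.

End UpperBound.

Section Separation.
Variables (R : realType) (P : nat) (M : nat -> nat) (a c : nat -> nat -> R) (b d : nat -> R).
Hypothesis HLG : LG_system P M a c b d.
Local Notation Sig := (Sig P M).
Local Notation Pi := (Pi a c b d).
Local Notation corner1 := (corner1 a c b d).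
Local Notation corner2 := (corner2 a c b d).

(* rows of the same level are stacked without overlap, so a point closer
   to Pi w than its distance to the boundary of the row of w must be in
   that row *)
Lemma tag_eq_of_close (w w' : Sig) k δ :
  corner2 w' k = corner2 w k -> prod_b b w' k = prod_b b w k ->
  δ <= (Pi w).2 - corner2 w k.+1 ->
  δ <= corner2 w k.+1 + prod_b b w k.+1 - (Pi w).2 ->
  `|(Pi w').2 - (Pi w).2| < δ -> tag (w' k) = tag (w k).
Proof.
move=> e1 e2 h1 h2; rewrite ltr_norml => /andP[hd1 hd2].
have [_ /andP[y1 y2]] := Pi_in_rect HLG w' k.+1.
rewrite corner2S prod_bS e1 e2 /dD /bD in y1 y2.
rewrite corner2S prod_bS /dD /bD in h1 h2.
have stacked (i j : 'I_P.+1) : (i < j)%N ->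
    prod_b b w k * (d i + b i) <= prod_b b w k * d j.
  by move=> ij; rewrite ler_pM2l ?(prod_b_gt0 HLG) // (d_add_b_le HLG ij) // -ltnS.
by case: (ltngtP (tag (w' k)) (tag (w k))) => [/stacked|/stacked|/val_inj //] => ?; exfalso; lra.
Qed.

Lemma digit_eq_of_close (w w' : Sig) k δ : tag (w' k) = tag (w k) ->
  corner1 w' k = corner1 w k -> prod_a a w' k = prod_a a w k ->
  δ <= (Pi w).1 - corner1 w k.+1 ->
  δ <= corner1 w k.+1 + prod_a a w k.+1 - (Pi w).1 ->
  `|(Pi w').1 - (Pi w).1| < δ -> w' k = w k.
Proof.
move=> et e1 e2 h1 h2; rewrite ltr_norml => /andP[hd1 hd2].
have [/andP[y1 y2] _] := Pi_in_rect HLG w' k.+1.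
rewrite corner1S prod_aS e1 e2 in y1 y2.
rewrite corner1S prod_aS in h1 h2.
have pa0 := prod_a_gt0 HLG w k.
case: (ltngtP (tagged (w' k)) (tagged (w k))) => [lt|gt|/(digit_inj et) //].
- by have ? := ler_wpM2l (ltW pa0) (cD_add_aD_le HLG et lt); clear et; exfalso; lra.
- by have ? := ler_wpM2l (ltW pa0) (cD_add_aD_le HLG (esym et) gt); clear et; exfalso; lra.
Qed.

Lemma close_mem_Bn (w : Sig) n δ : (1 <= n)%N ->
  (forall l, (l <= Ln a b w n)%N ->
     δ <= (Pi w).1 - corner1 w l /\ δ <= corner1 w l + prod_a a w l - (Pi w).1) ->
  (forall l, (l <= n)%N ->
     δ <= (Pi w).2 - corner2 w l /\ δ <= corner2 w l + prod_b b w l - (Pi w).2) ->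
  forall w', `|(Pi w').1 - (Pi w).1| < δ -> `|(Pi w').2 - (Pi w).2| < δ ->
  Bn a b w n w'.
Proof.
move=> n1 Hh Hv w' d1 d2.
have Ln' := Ln_le HLG w n1; set L := Ln a b w n in Hh Ln' *.
suff H k : (k <= n)%N -> (forall j, (j < k)%N -> (j < L)%N -> w' j = w j) /\
                       (forall j, (j < k)%N -> tag (w' j) = tag (w j)).
  have [H1 H2] := H n (leqnn n); split => [k kL|k _]; last exact: H2.
  exact: H1 (leq_trans kL Ln') kL.
elim: k => [|k IH] kn; first by [].
have [IH1 IH2] := IH (ltnW kn).
have [e1 e2] := corner2_prefix a c b d IH2.
have [h1 h2] := Hv k.+1 kn.
have tk := tag_eq_of_close e1 e2 h1 h2 d2.
split => j; rewrite ltnS leq_eqVlt => /orP[/eqP ->|jk]; [|exact: IH1|exact: tk|exact: IH2].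
move=> kL; have [f1 f2] := corner1_prefix a c b d (fun j jk => IH1 j jk (ltn_trans jk kL)).
have [g1 g2] := Hh k.+1 kL.
exact: digit_eq_of_close tk f1 f2 g1 g2 d1.
Qed.

End Separation.

Section Margins.
Variables (R : realType) (P : nat) (M : nat -> nat) (a c : nat -> nat -> R) (b d : nat -> R).
Hypothesis HLG : LG_system P M a c b d.
Local Notation Sig := (Sig P M).
Local Notation digit := (digit P M).
Local Notation Pi := (Pi a c b d).
Local Notation corner1 := (corner1 a c b d).
Local Notation corner2 := (corner2 a c b d).

Lemma two_dimensional_gaps : two_dimensional P M ->
  [/\ exists eL : digit, 0 < cD c eL, exists eR : digit, aD a eR + cD c eR < 1,
      exists eB : digit, 0 < dD d eB & exists eT : digit, bD b eT + dD d eT < 1].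
Proof.
move=> [[x [y [txy nxy]]] [u [v nuv]]].
have [x' [y' [t' lt']]] : exists x' y' : digit, tag x' = tag y' /\ (tagged x' < tagged y')%N.
  case: (ltngtP (tagged x) (tagged y)) => [lt|gt|/(digit_inj txy) //].
    by exists x, y.
  by exists y, x.
have [u' [v' lt2]] : exists u' v' : digit, (tag u' < tag v')%N.
  case: (ltngtP (tag u) (tag v)) => [lt|gt|/val_inj //].
    by exists u, v.
  by exists v, u.
have hc := cD_add_aD_le HLG t' lt'.
have hd := d_add_b_le HLG lt2 (tag_le v').
have ax := aD_gt0 HLG x'; have cx := cD_ge0 HLG x'; have cy := cD_lt1 HLG y'.
have bu := bD_gt0 HLG u'; have du := dD_ge0 HLG u'; have dv := dD_lt1 HLG v'.
rewrite /dD /bD in bu du dv *; clear t'.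
split; [exists y'|exists x'|exists v'|exists u']; lra.
Qed.

Lemma corner1_margin (w : Sig) l k : (l <= k)%N ->
  prod_a a w k * cD c (w k) <= (Pi w).1 - corner1 w l.
Proof.
move=> lk; have [/andP[h _] _] := Pi_in_rect HLG w k.+1.
by rewrite corner1S in h; have := corner1_homo HLG w lk; lra.
Qed.

Lemma edge1_margin (w : Sig) l k : (l <= k)%N ->
  prod_a a w k * (1 - (aD a (w k) + cD c (w k))) <= corner1 w l + prod_a a w l - (Pi w).1.
Proof.
move=> lk; have [/andP[_ h] _] := Pi_in_rect HLG w k.+1.
by rewrite corner1S prod_aS in h; have := edge1_homo HLG w lk; lra.
Qed.

Lemma corner2_margin (w : Sig) l k : (l <= k)%N ->
  prod_b b w k * dD d (w k) <= (Pi w).2 - corner2 w l.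
Proof.
move=> lk; have [_ /andP[h _]] := Pi_in_rect HLG w k.+1.
by rewrite corner2S in h; have := corner2_homo HLG w lk; lra.
Qed.

Lemma edge2_margin (w : Sig) l k : (l <= k)%N ->
  prod_b b w k * (1 - (bD b (w k) + dD d (w k))) <= corner2 w l + prod_b b w l - (Pi w).2.
Proof.
move=> lk; have [_ /andP[_ h]] := Pi_in_rect HLG w k.+1.
by rewrite corner2S prod_bS in h; have := edge2_homo HLG w lk; lra.
Qed.

End Margins.

Section FrequentReturns.
Variables (R : realType) (P : nat) (M : nat -> nat).
Local Notation Sig := (Sig P M).
Local Notation digit := (digit P M).

Definition frequent_returns (w : Sig) q N := forall n, (N <= n)%N -> forall e : digit,
  exists k, [/\ (n <= k)%N, w k = e & ((k.+1 - n) * q <= n)%N].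

Lemma Rd_first_return (w : Sig) n e : Rd R w n e != +oo%E ->
  exists k, [/\ (n <= k)%N, w k = e & Rd R w n e = (k.+1 - n)%:R%:E].
Proof.
rewrite /Rd; case: pselect => [ex _|//].
have exmin : exists k, [set k | ((n <= k)%N /\ w k = e) /\
    forall k', (n <= k')%N -> w k' = e -> (k <= k')%N] k.
  have exP : exists k, (n <= k)%N && (w k == e).
    by have [k [h1 h2]] := ex; exists k; rewrite h1 h2 eqxx.
  case: (ex_minnP exP) => k /andP[h1 /eqP h2] hmin; exists k; split => //.
  by move=> k' h1' h2'; apply: hmin; rewrite h1' h2' eqxx.
have := xgetPex 0%N exmin; set k := xget 0%N _ => -[[h1 h2] _].
by exists k.
Qed.

Lemma frequent_returns_of_Rn (w : Sig) :
  (fun n : nat => (Rn R w n * ((n%:R : R)^-1)%:E)%E) @ \oo --> ((0 : R)%:E) ->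
  forall q, (0 < q)%N -> exists N, frequent_returns w q N.
Proof.
move=> /fine_cvgP [[N2 _ H2] hfine] q q0.
have qi : 0 < (q%:R : R)^-1 by rewrite invr_gt0 ltr0n.
have [N1 _ H1] := cvgr0_norm_lt _ hfine _ qi.
exists (maxn 1 (maxn N1 N2)) => n; rewrite !geq_max => /and3P[n1 nN1 nN2] e.
have n0 : (0 : R) < n%:R by rewrite ltr0n.
have hlt : (Rn R w n * (n%:R^-1)%:E < (q%:R^-1)%:E)%E.
  by rewrite -(fineK (H2 n nN2)) lte_fin; apply: le_lt_trans (ler_norm _) (H1 n nN1).
have hle : (Rd R w n e * (n%:R^-1)%:E <= Rn R w n * (n%:R^-1)%:E)%E.
  by apply: lee_wpmul2r; [rewrite lee_fin invr_ge0 ltW|exact: le_bigmax].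
have := le_lt_trans hle hlt; have [Rdoo|] := eqVneq (Rd R w n e) +oo%E.
  by rewrite Rdoo gt0_mulye ?lte_fin ?invr_gt0.
move=> /Rd_first_return [k [h1 h2 ->]]; rewrite -EFinM lte_fin => hk.
exists k; split => //; move: hk.
by rewrite ltr_pdivrMr // [_ * n%:R]mulrC ltr_pdivlMr ?ltr0n // -natrM ltr_nat => /ltnW.
Qed.

End FrequentReturns.

Lemma exists_last_above (R : realType) (f : nat -> R) r N : r < f N ->
  (exists K, forall n, (K <= n)%N -> f n <= r) ->
  exists n, [/\ (N <= n)%N, r < f n & f n.+1 <= r].
Proof.
move=> rN [K HK].
have exS : exists n, (N <= n)%N && (r < f n) by exists N; rewrite leqnn rN.
have ubS n : (N <= n)%N && (r < f n) -> (n <= K)%N.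
  by case/andP=> _; apply: contraTleq => /ltnW /HK; rewrite leNgt => /negbTE ->.
case: (ex_maxnP exS ubS) => n /andP[Nn rn] nmax; exists n; split => //.
by rewrite leNgt; apply/negP => rn1; have := nmax n.+1; rewrite rn1 ltnn (leq_trans Nn) // => /(_ isT).
Qed.

(* [lr], [lrho], [lu], [lv] stand for the logarithms of the radius, of
   rho_n and of the two measures; [C], [A], [B] for [-ln gap], [-ln amin],
   [-ln bmax]. *)
Lemma ln_ratio_shift_scale (R : realType) (t ε lu lv lrho lr C A B q n : R) :
  0 < ε -> lu <= lv -> lrho < 0 -> lr < 0 -> lr <= lrho -> lv < t * lrho ->
  0 <= C -> 0 < A -> 0 < B -> 0 < q -> 1 <= n ->
  - lr * q <= (C + 2 * A - lrho) * q + (n + 1) * A ->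
  n * B <= - lrho -> 2 * t * (C + 2 * A) <= ε * (- lrho) -> 4 * t * A <= ε * B * q ->
  t - ε <= lu / lr.
Proof.
move=> e0 huv hρ hr hrρ hv C0 A0 B0 q0 n1 hD hΛ h2 h4.
rewrite ler_ndivlMr //.
suff : t * lrho <= (t - ε) * lr by lra.
have [t0|t0] := leP t 0.
  have : t * (lrho - lr) <= ε * (- lr) by nra.
  nra.
have [te|te] := leP (t - ε) 0; first nra.
have h1 : (t - ε) * (- lr * q) <= (t - ε) * ((C + 2 * A - lrho) * q + (n + 1) * A).
  by rewrite ler_wpM2l // ltW // subr_gt0.
have h2' : (t - ε) * (C + 2 * A) <= ε * (- lrho) / 2.
  have : (t - ε) * (C + 2 * A) <= t * (C + 2 * A) by rewrite ler_wpM2r //; lra.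
  lra.
have h3 : (t - ε) * (n + 1) * A <= n * (ε * B * q) / 2.
  have : (t - ε) * (n + 1) * A <= t * (2 * n) * A.
    by rewrite ler_wpM2r //; [lra|nra].
  nra.
have h5 : n * (ε * B * q) <= (- lrho) * ε * q.
  have : n * B * (ε * q) <= (- lrho) * (ε * q) by rewrite ler_wpM2r // mulr_ge0 // ltW.
  lra.
have : (t - ε) * (- lr * q) <= t * (- lrho) * q by nra.
move=> h; have : (t - ε) * (- lr) <= t * (- lrho) by rewrite -(ler_pM2r q0); lra.
lra.
Qed.

Lemma window_leq_div s n k q : (0 < q)%N -> (s <= n)%N -> (s <= k)%N ->
  ((k.+1 - s) * q <= s)%N -> (k - s <= n %/ q)%N.
Proof.
move=> q0 sn sk h; rewrite leq_divRL //; apply: leq_trans _ (leq_trans h sn).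
by rewrite leq_mul2r subSn // leqnSn orbT.
Qed.

Section InnerBall.
Variables (R : realType) (P : nat) (M : nat -> nat) (a c : nat -> nat -> R) (b d : nat -> R).
Hypothesis HLG : LG_system P M a c b d.
Local Notation Sig := (Sig P M).
Local Notation digit := (digit P M).
Local Notation Pi := (Pi a c b d).
Local Notation amin := (amin P M a).

Variables (eL eR eB eT : digit).
Hypotheses (hL : 0 < cD c eL) (hR : aD a eR + cD c eR < 1)
  (hB : 0 < dD d eB) (hT : bD b eT + dD d eT < 1).

Definition gap : R := Num.min (Num.min (cD c eL) (1 - (aD a eR + cD c eR)))
   (Num.min (dD d eB) (1 - (bD b eT + dD d eT))).

Lemma gap_gt0 : 0 < gap.
Proof. by rewrite /gap !lt_min hL hB !subr_gt0 hR hT. Qed.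

Lemma gap_lt1 : gap < 1.
Proof. by apply: le_lt_trans (cD_lt1 HLG eL); rewrite /gap !ge_min lexx. Qed.

Definition inner_radius (w : Sig) q n : R := gap * amin ^+ (n %/ q).+1 * prod_b b w n.

Lemma inner_radius_gt0 (w : Sig) q n : 0 < inner_radius w q n.
Proof.
by rewrite !mulr_gt0 ?gap_gt0 ?exprn_gt0 ?(amin_gt0 HLG) ?(prod_b_gt0 HLG).
Qed.

Lemma inner_radius_le_prod_b (w : Sig) q n : inner_radius w q n <= prod_b b w n.
Proof.
rewrite /inner_radius ger_pMl ?(prod_b_gt0 HLG) // -[1]mulr1.
have a0 := amin_gt0 HLG; have a1 := amin_lt1 HLG; have C0 := gap_gt0.
apply: ler_pM; [exact: ltW|exact/exprn_ge0/ltW|exact: ltW gap_lt1|].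
by apply: exprn_ile1; exact: ltW.
Qed.

Lemma inner_radius_le_mul (w : Sig) q n p κ : gap <= κ ->
  amin * prod_b b w n * amin ^+ (n %/ q) <= p -> inner_radius w q n <= p * κ.
Proof.
move=> Cκ hp.
have -> : inner_radius w q n = (amin * prod_b b w n * amin ^+ (n %/ q)) * gap.
  by rewrite /inner_radius exprS; ring.
apply: ler_pM => //; last exact/ltW/gap_gt0.
by apply/ltW; rewrite !mulr_gt0 ?exprn_gt0 ?(amin_gt0 HLG) ?(prod_b_gt0 HLG).
Qed.

Lemma amin_window_le q n s k : (0 < q)%N -> (s <= n)%N -> (s <= k)%N ->
  ((k.+1 - s) * q <= s)%N -> amin ^+ (n %/ q) <= amin ^+ (k - s).
Proof.
move=> q0 sn sk h; apply: ler_wiXn2l; rewrite ?ltW ?(amin_gt0 HLG) ?(amin_lt1 HLG) //.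
exact: window_leq_div.
Qed.

Lemma inner_radius_le_margin1 (w : Sig) q N n l : (0 < q)%N ->
  frequent_returns w q N -> (1 <= n)%N -> (N <= Ln a b w n)%N -> (l <= Ln a b w n)%N ->
  inner_radius w q n <= (Pi w).1 - corner1 a c b d w l /\
  inner_radius w q n <= corner1 a c b d w l + prod_a a w l - (Pi w).1.
Proof.
move=> q0 HW n1 NL lL; have Ln_n := Ln_le HLG w n1.
have window (k : nat) : (Ln a b w n <= k)%N ->
    ((k.+1 - Ln a b w n) * q <= Ln a b w n)%N ->
    amin * prod_b b w n * amin ^+ (n %/ q) <= prod_a a w k.
  move=> Lk hk; apply: le_trans (prod_a_amin_le HLG w Lk).
  have a0 := amin_gt0 HLG; have ρ0 := prod_b_gt0 HLG w n.
  apply: ler_pM; [exact/ltW/mulr_gt0|exact/exprn_ge0/ltW|exact: (amin_prod_b_le_prod_a_Ln HLG)|].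
  exact: amin_window_le.
have [k1 [h1 e1 w1]] := HW _ NL eL; have [k2 [h2 e2 w2]] := HW _ NL eR.
split.
- apply: le_trans (corner1_margin HLG w (leq_trans lL h1)).
  by rewrite e1; apply: inner_radius_le_mul (window _ h1 w1); rewrite /gap !ge_min lexx.
- apply: le_trans (edge1_margin HLG w (leq_trans lL h2)).
  by rewrite e2; apply: inner_radius_le_mul (window _ h2 w2); rewrite /gap !ge_min lexx orbT.
Qed.

Lemma inner_radius_le_margin2 (w : Sig) q N n l : (0 < q)%N ->
  frequent_returns w q N -> (N <= n)%N -> (l <= n)%N ->
  inner_radius w q n <= (Pi w).2 - corner2 a c b d w l /\
  inner_radius w q n <= corner2 a c b d w l + prod_b b w l - (Pi w).2.
Proof.
move=> q0 HW Nn ln.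
have window (k : nat) : (n <= k)%N -> ((k.+1 - n) * q <= n)%N ->
    amin * prod_b b w n * amin ^+ (n %/ q) <= prod_b b w k.
  move=> nk hk; apply: le_trans (prod_b_amin_le HLG w nk).
  have a0 := amin_gt0 HLG; have ρ0 := prod_b_gt0 HLG w n.
  apply: ler_pM; [exact/ltW/mulr_gt0|exact/exprn_ge0/ltW| |exact: amin_window_le].
  by rewrite ger_pMl // ltW // (amin_lt1 HLG).
have [k1 [h1 e1 w1]] := HW _ Nn eB; have [k2 [h2 e2 w2]] := HW _ Nn eT.
split.
- apply: le_trans (corner2_margin HLG w (leq_trans ln h1)).
  by rewrite e1; apply: inner_radius_le_mul (window _ h1 w1); rewrite /gap !ge_min lexx !orbT.
- apply: le_trans (edge2_margin HLG w (leq_trans ln h2)).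
  by rewrite e2; apply: inner_radius_le_mul (window _ h2 w2); rewrite /gap !ge_min lexx !orbT.
Qed.

Lemma preimage_ball2_sub_Bn (w : Sig) q N n r : (0 < q)%N ->
  frequent_returns w q N -> (1 <= n)%N -> (N <= n)%N -> (N <= Ln a b w n)%N ->
  0 < r -> r < inner_radius w q n -> Pi @^-1` ball2 (Pi w) r `<=` Bn a b w n.
Proof.
move=> q0 HW n1 Nn NL r0 rs w'; rewrite /ball2 /= => hb.
have close (u v : R) : u ^+ 2 + v ^+ 2 <= r ^+ 2 -> `|u| < inner_radius w q n.
  move=> h; have /andP[h1 h2] : -r <= u <= r.
    by apply: sqr_le_bound; [exact: ltW|apply: le_trans h; rewrite lerDl sqr_ge0].
  by apply: le_lt_trans rs; rewrite ler_norml h1 h2.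
apply: (close_mem_Bn HLG n1) (close _ _ hb) _.
- by move=> l; exact: inner_radius_le_margin1 q0 HW n1 NL.
- by move=> l; exact: inner_radius_le_margin2 q0 HW Nn.
- by apply: (close _ ((Pi w').1 - (Pi w).1)); rewrite addrC.
Qed.


Lemma ln_inner_radius_bound (w : Sig) q n r : (0 < q)%N -> 0 < r ->
  inner_radius w q n.+1 <= r ->
  - ln r * q%:R <= (- ln gap + 2 * (- ln amin) - ln (prod_b b w n)) * q%:R
                   + (n%:R + 1) * (- ln amin).
Proof.
move=> q0 r0 hr; set k := (n.+1 %/ q)%N.
have a0 := amin_gt0 HLG; have ρ0 := prod_b_gt0 HLG w n.
have b0 := bD_gt0 HLG (w n); have C0 := gap_gt0.
have lnr : ln (inner_radius w q n.+1) <= ln r.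
  by rewrite ler_ln ?posrE ?inner_radius_gt0.
have lnE : ln (inner_radius w q n.+1) =
    ln gap + k.+1%:R * ln amin + ln (prod_b b w n) + ln (bD b (w n)).
  rewrite /inner_radius -/k prod_bS.
  by rewrite !lnM ?posrE ?mulr_gt0 ?exprn_gt0 // lnXn // mulr_natl; ring.
rewrite lnE in lnr.
have hb : ln amin <= ln (bD b (w n)) by rewrite ler_ln ?posrE ?(amin_le_bD HLG).
have hk : k%:R * q%:R <= n%:R + 1 :> R by rewrite -natrM natr1 ler_nat leq_divM.
have lA : ln amin < 0 by rewrite ln_lt0 // a0 (amin_lt1 HLG).
have qR : (0 : R) < q%:R by rewrite ltr0n.
have : - ln r <= - ln gap + (k%:R + 2) * (- ln amin) - ln (prod_b b w n).
  by rewrite -natr1 in lnr; lra.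
move=> /(ler_wpM2r (ltW qR)).
have : k%:R * q%:R * (- ln amin) <= (n%:R + 1) * (- ln amin).
  by rewrite ler_wpM2r // oppr_ge0 ltW.
nra.
Qed.

Lemma ln_ratio_at_scale (w : Sig) q n r t ε u v : (0 < q)%N -> (1 <= n)%N -> 0 < ε ->
  4 * t * (- ln amin) <= ε * (- ln (bmax P M b)) * q%:R ->
  prod_b b w n < expR (- (2 * t * (- ln gap + 2 * (- ln amin))) / ε) ->
  0 < r -> r < inner_radius w q n -> inner_radius w q n.+1 <= r ->
  0 < u -> u <= v -> t < ln v / ln (prod_b b w n) -> t - ε <= ln u / ln r.
Proof.
move=> q0 n1 ε0 hq hΛ r0 rn rn1 u0 uv ht.
have a0 := amin_gt0 HLG; have a1 := amin_lt1 HLG.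
have bm0 := bmax_gt0 HLG; have bm1 := bmax_lt1 HLG.
have ρ0 := prod_b_gt0 HLG w n.
have rρ : r < prod_b b w n := lt_le_trans rn (inner_radius_le_prod_b w q n).
have ρ1 : prod_b b w n < 1.
  by apply: le_lt_trans (prod_b_le_bmax HLG w n) _; rewrite expr_lt1 // ?ltW // -lt0n.
have lnρ : ln (prod_b b w n) < 0 by rewrite ln_lt0 // ρ0.
rewrite ltr_ndivlMr // in ht.
apply: (ln_ratio_shift_scale (C := - ln gap) (A := - ln amin) (B := - ln (bmax P M b))
   (q := q%:R) (n := n%:R) ε0 _ lnρ _ _ ht) => //.
- by rewrite ler_ln ?posrE //; exact: lt_le_trans uv.
- by rewrite ln_lt0 // r0; exact: lt_trans rρ ρ1.
- by rewrite ler_ln ?posrE // ltW.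
- by rewrite oppr_ge0 ln_le0 // ltW ?gap_lt1.
- by rewrite oppr_gt0 ln_lt0 // a0.
- by rewrite oppr_gt0 ln_lt0 // bm0.
- by rewrite ltr0n.
- by rewrite ler1n.
- exact: ln_inner_radius_bound.
- have : ln (prod_b b w n) <= ln (bmax P M b ^+ n).
    by rewrite ler_ln ?posrE ?exprn_gt0 // (prod_b_le_bmax HLG).
  by rewrite lnXn // -mulr_natl; lra.
- have := ln_lt_of_lt_expR ρ0 hΛ; rewrite ltr_pdivlMr // => h.
  by rewrite mulrC; lra.
Qed.

Variable mu : {finite_measure set (SigB P M) -> \bar R}.

Lemma limn_einf_Bn_le_limf_einf_ball2 (w : Sig) :
  (fun n : nat => (Rn R w n * ((n%:R : R)^-1)%:E)%E) @ \oo --> ((0 : R)%:E) ->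
  (limn_einf (fun n => elog (mu (Bn a b w n)) * (ln (prod_b b w n))^-1%:E) <=
   limf_einf (fun r : R => elog (mu (Pi @^-1` ball2 (Pi w) r)) * (ln r)^-1%:E)
     (0 : R)^'+)%E.
Proof.
move=> hRn; apply: lee_real_bounds => t /lt_limf_einf [V [N1 _ HN1] HV].
apply/lee_addgt0Pr => ε ε0; rewrite -leeBlDr // -EFinB.
have A0 : 0 < - ln amin by rewrite oppr_gt0 ln_lt0 // (amin_gt0 HLG) (amin_lt1 HLG).
have B0 : 0 < - ln (bmax P M b) by rewrite oppr_gt0 ln_lt0 // (bmax_gt0 HLG) (bmax_lt1 HLG).
pose q := (Num.truncn (4 * t * (- ln amin) / (ε * (- ln (bmax P M b))))).+1.
have hq : 4 * t * (- ln amin) <= ε * (- ln (bmax P M b)) * q%:R.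
  by apply/ltW; rewrite [X in _ < X]mulrC -ltr_pdivrMr ?mulr_gt0 // truncnS_gt.
have [NW HW] := frequent_returns_of_Rn hRn (ltn0Sn _ : (0 < q)%N).
have [NL HNL] := prod_b_small HLG (exprn_gt0 NW (amin_gt0 HLG)).
have [NΛ HNΛ] := prod_b_small HLG
  (expR_gt0 (- (2 * t * (- ln gap + 2 * (- ln amin))) / ε)).
pose N := maxn 1 (maxn N1 (maxn NW (maxn NL NΛ))).
apply: (@limf_einf_ge _ _ _ _ _ _ [set r | 0 < r < inner_radius w q N]).
  exists (inner_radius w q N) => /=; first exact: inner_radius_gt0.
  by move=> r /= + r0; rewrite r0 /ball_ /= sub0r normrN gtr0_norm.
move=> r /andP[r0 rN].
have [n [Nn rn rn1]] : exists n, [/\ (N <= n)%N, r < inner_radius w q n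
                                   & inner_radius w q n.+1 <= r].
  apply: exists_last_above rN _; have [K HK] := prod_b_small HLG r0.
  by exists K => n /(HK w) /ltW; exact: le_trans (inner_radius_le_prod_b w q n).
move: Nn; rewrite !geq_max => /and5P[n1 nN1 nNW nNL nNΛ].
have sub := preimage_ball2_sub_Bn (ltn0Sn _) HW n1 nNW (Ln_ge HLG (HNL w n nNL)) r0 rn.
have mB := Bn_measurable a b w n.
have mball := preimage_ball2_measurable HLG (Pi w) r.
apply: elog_ratio_transfer (HV n (HN1 n nN1)); rewrite ?fin_num_measure //.
- exact: le_measure (mem_set mball) (mem_set mB) sub.
- rewrite ln_lt0 // r0 (lt_le_trans rn) // (le_trans (inner_radius_le_prod_b w q n)) //.
  exact: (prod_b_le1 HLG).
- by move=> u v u0 uv; exact: ln_ratio_at_scale (HNΛ w n nNΛ) r0 rn rn1 u0 uv.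
Qed.

End InnerBall.

Theorem lemma2p1 (R : realType) (P : nat) (M : nat -> nat)
    (a c : nat -> nat -> R) (b d : nat -> R)
    (HLG : LG_system P M a c b d)
    (mu : {finite_measure set (SigB P M) -> \bar R}) :
  let nu := fun A : set (R * R) => mu (Pi a c b d @^-1` A) in
  let lhs := fun w : Sig P M =>
    limf_einf (fun r : R => (elog (nu (ball2 (Pi a c b d w) r)) * ((ln r)^-1)%:E)%E)
      ((0 : R)^'+) in
  let rhs := fun w : Sig P M =>
    limn_einf (fun n : nat =>
      (elog (mu (Bn a b w n)) * ((ln (prod_b b w n))^-1)%:E)%E) in
  (two_dimensional P M ->
     forall w : Sig P M,
       (fun n : nat => (Rn R w n * ((n%:R : R)^-1)%:E)%E) @ \oo --> ((0 : R)%:E) ->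
       (rhs w <= lhs w)%E)
  /\ (forall w : Sig P M, (lhs w <= rhs w)%E).
Proof.
move=> nu lhs rhs; split; last exact: limf_einf_ball2_le_limn_einf_Bn.
move=> /(two_dimensional_gaps HLG) [[eL hL] [eR hR] [eB hB] [eT hT]] w.
exact: (limn_einf_Bn_le_limf_einf_ball2 HLG hL hR hB hT).
Qed.
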